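(* Let $\delta=10^{-10}$, let $k\ge\delta^{-2}$ be an integer, and let $G$ be a graph on $n\le(1+\delta)k$ vertices with average degree $d(G)>k-1$. Set $a:=n-k$ and let $b$ be the number of vertices of $G$ of degree at most $\frac{2k}{3}+a$. Suppose that the maximum degree satisfies $\Delta(G)<k+b$. Then more than $k/6$ vertices of $G$ have degree at least $k$.
   Context: The average degree of a graph $G$ is $d(G)=2|E(G)|/|V(G)|$; $\Delta(G)$ is the maximum degree. *)

From mathcomp Require Import all_boot all_order all_algebra.
Set Implicit Arguments. Unset Strict Implicit. Unset Printing Implicit Defensive.
Import Order.TTheory GRing.Theory Num.Theory.

Definition simple_graph (T : finType) (e : rel T) : Prop :=
  symmetric e /\ irreflexive e.

Definition deg (T : finType) (e : rel T) (v : T) : nat := #|[set u | e v u]|.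

Definition nedges (T : finType) (e : rel T) : nat := (\sum_(v : T) deg e v) %/ 2.

Definition avg_deg (T : finType) (e : rel T) : rat :=
  ((2 * nedges e)%:R / (#|T|)%:R)%R.

Definition max_deg (T : finType) (e : rel T) : nat := \max_(v : T) deg e v.

Definition delta : rat := ((10 ^+ 10)%R)^-1%R.

From mathcomp Require Import all_boot all_order all_algebra.
From mathcomp Require Import lra.
Import Order.TTheory GRing.Theory Num.Theory.

Local Open Scope ring_scope.

(* Put [H] = vertices of degree at least k and [B] = vertices of degree at
   most t := 2k/3 + a, with |B| = b.  Every vertex has degree at most k - 1,
   a vertex of [H] at most k - 1 + b (as Delta < k + b), and a vertex of [B]
   at most k - 1 - c with c := k/3 - a - 1.  Summing over the vertices,
   (k - 1) n < sum of degrees <= (k - 1) n + b |H| - c b, so b (|H| - c) > 0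
   and |H| > c >= k/6 since a <= delta k is tiny compared to k. *)

Section DegreeCounting.

Context {R : realDomainType}.

Lemma sum_natr_card (T : finType) (P : pred T) :
  \sum_(v : T) (P v)%:R = #|[set v | P v]|%:R :> R.
Proof.
rewrite -sumr_const [RHS]big_mkcond /=.
by apply: eq_bigr => v _; rewrite inE; case: (P v).
Qed.

Lemma deg_le_weight (t : R) {d k m : nat} : (d < k + m)%N ->
  d%:R <= k%:R - 1 + (k <= d)%N%:R * m%:R
          - (d%:R <= t :> R : bool)%:R * (k%:R - 1 - t) :> R.
Proof.
move=> ltdkm.
have ltdk1 : (k <= d)%N = false -> d%:R <= k%:R - 1 :> R.
  by move=> /negbT; rewrite -ltnNge -(ler_nat R) -natr1 lerBrDr.
have ltdkm1 : d%:R <= k%:R - 1 + m%:R :> R.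
  by move: ltdkm; rewrite -(ler_nat R) -natr1 natrD; lra.
case: (boolP (k <= d)%N) => [lekd|/negbTE ltdk]; case: (boolP (d%:R <= t)) => led;
  rewrite ?mul1r ?mul0r ?subr0 ?addr0 //; last exact: ltdk1.
- have : 0 <= m%:R :> R by apply: ler0n.
  lra.
- by move: (ltdk1 ltdk); lra.
Qed.

Lemma sum_deg_le_count {T : finType} {d : T -> nat} {k m : nat} (t : R) :
  (forall v, d v < k + m)%N ->
  (\sum_(v : T) d v)%N%:R <= (k%:R - 1) * #|T|%:R
    + m%:R * #|[set v | (k <= d v)%N]|%:R
    - (k%:R - 1 - t) * #|[set v | (d v)%:R <= t]|%:R.
Proof.
move=> ltdkm; rewrite natr_sum.
apply: le_trans (ler_sum _ (P := xpredT) (fun v _ => deg_le_weight t (ltdkm v))) _.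
rewrite sumrB big_split /= sumr_const -[_ *+ _]mulr_natr -!mulr_suml.
by rewrite !sum_natr_card [_ * m%:R]mulrC [_ * (k%:R - 1 - t)]mulrC.
Qed.

End DegreeCounting.

Lemma sum_deg_gt {T : finType} {e : rel T} {x : rat} :
  0 <= x -> x < avg_deg e -> x * #|T|%:R < (\sum_(v : T) deg e v)%N%:R.
Proof.
move=> x_ge0; rewrite /avg_deg.
have [->|n_gt0] := posnP #|T|; first by rewrite invr0 mulr0; lra.
rewrite ltr_pdivlMr ?ltr0n // => /lt_le_trans; apply.
by rewrite ler_nat /nedges mulnC leq_divM.
Qed.

(* Hiding 10 ^+ 10 behind a variable keeps [lra] from normalising it, which
   it would do in unary. *)
Lemma delta_eq : exists2 y : rat, delta = y^-1 & 100 <= y.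
Proof.
exists (10 ^+ 10); first reflexivity.
have -> : (10 : rat) ^+ 10 = 10 ^+ 2 * 10 ^+ 8 by rewrite -exprD.
have : 1 <= (10 : rat) ^+ 8 by rewrite exprn_ege1.
move: (10 ^+ 8) => x x_ge1.
by rewrite expr2; lra.
Qed.

Lemma delta_le : delta <= 1 / 100.
Proof.
have [y -> y_ge] := delta_eq.
rewrite mul1r lef_pV2 ?posrE; lra.
Qed.

Lemma delta_inv_sqr_ge : 10000 <= delta^-1 ^+ 2.
Proof.
have [y -> y_ge] := delta_eq.
rewrite invrK expr2.
apply: le_trans (ler_pM _ _ y_ge y_ge); lra.
Qed.

Lemma excess_le {R : realFieldType} {n k d : R} :
  0 <= k -> d <= 1 / 100 -> n <= (1 + d) * k -> n - k <= k / 100.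
Proof.
move=> k_ge0 d_le n_le.
have : d * k <= 1 / 100 * k by rewrite ler_wpM2r.
lra.
Qed.

Lemma sixth_lt_of_sum_bounds {R : realFieldType} {k a b h n S : R} :
  10000 <= k -> a <= k / 100 -> 0 <= b -> (k - 1) * n < S ->
  S <= (k - 1) * n + b * h - (k - 1 - (2 * k / 3 + a)) * b -> k / 6 < h.
Proof.
move=> k_ge a_le b_ge0 S_gt S_le; rewrite ltNge; apply/negP => h_le.
have : b * (h - (k / 3 - a - 1)) <= 0 by apply: mulr_ge0_le0 => //; lra.
lra.
Qed.

Theorem mainTheorem4 (T : finType) (e : rel T) (k : nat) :
  simple_graph e ->
  (delta ^-1 ^+ 2 <= k%:R)%R ->
  ((#|T|)%:R <= (1 + delta) * k%:R)%R ->
  (k%:R - 1 < avg_deg e)%R ->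
  let a : rat := ((#|T|)%:R - k%:R)%R in
  let b : nat := #|[set v : T | (((deg e v)%:R : rat) <= 2%:R * k%:R / 3%:R + a)%R]| in
  (max_deg e < k + b)%N ->
  ((k%:R / 6%:R : rat) < (#|[set v : T | (k <= deg e v)%N]|)%:R)%R.
Proof.
move=> _ k_ge n_le avg_gt a b Delta_lt.
have {}k_ge : 10000 <= k%:R :> rat := le_trans delta_inv_sqr_ge k_ge.
have {n_le} a_le : a <= k%:R / 100 := excess_le (ler0n _ k) delta_le n_le.
have deg_lt v : (deg e v < k + b)%N.
  by apply: leq_ltn_trans Delta_lt; apply: leq_bigmax.
have k1_ge0 : 0 <= k%:R - 1 :> rat by lra.
apply: (sixth_lt_of_sum_bounds k_ge a_le (ler0n _ b) (sum_deg_gt k1_ge0 avg_gt)).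
exact: sum_deg_le_count.
Qed.
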